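(* Denote by $a^+_{n,k}$, $a^-_{n,k}$ and $d^B_{n,k}$ the coefficient of $x^k$ in $f^+_n(x)$, $f^-_n(x)$ and $d^B_n(x)$, respectively. Then for all $n \ge 2$ and $k \ge 1$: $$ a^+_{n,k} = (2k-1)\, a^+_{n-1,k} + 2(n-k)\, a^+_{n-1,k-1} + 2(n-1)\, a^+_{n-2,k-1} + d^B_{n-1,k}, $$ $$ a^-_{n,k} = (2k-1)\, a^-_{n-1,k} + 2(n-k)\, a^-_{n-1,k-1} + 2(n-1)\, a^-_{n-2,k-1} + d^B_{n-1,k-1}. $$
   Context: A signed permutation of $[n]$ is a set $S = \{a_1, \dots, a_n\}$ with $a_i \in \{i, -i\}$, together with a bijection $w : S \to S$. - $a \in S$ is a $B$-excedance if $w(a) > a$, or if $a < 0$ and $w(a) = a$. - $w$ is a derangement if no $a \in S$ with $a > 0$ has $w(a) = a$. - $d^B_n(x) = \sum_{w \text{ derangement}} x^{\mathrm{exc}_B(w)}$, where $\mathrm{exc}_B(w)$ is the number of $B$-excedances, and $d^B_0 = 1$. - $f^+_n, f^-_n$ are the unique real polynomials with $d^B_n = f^+_n + f^-_n$, $f^+_n(x) = x^n f^+_n(1/x)$ and $f^-_n(x) = x^{n+1} f^-_n(1/x)$. *)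

From HB Require Import structures.
From mathcomp Require Import all_boot all_order all_algebra all_fingroup.
Set Implicit Arguments. Unset Strict Implicit. Unset Printing Implicit Defensive.
Import Order.TTheory GRing.Theory Num.Theory.
Local Open Scope ring_scope.

(* A signed permutation of [n] is encoded as a pair (s, p):
   s i = true  means a_{i+1} = -(i+1), s i = false means a_{i+1} = i+1
   (so S = {a_1,...,a_n}), and the bijection w : S -> S is w(a_{i+1}) = a_{p i + 1}. *)
Definition signed_perm (n : nat) : finType :=
  ({ffun 'I_n -> bool} * {perm 'I_n})%type.

Definition selt n (s : {ffun 'I_n -> bool}) (i : 'I_n) : int :=
  if s i then - (i.+1)%:Z else (i.+1)%:Z.

Definition is_excB n (w : signed_perm n) (i : 'I_n) : bool :=
  (selt w.1 i < selt w.1 (w.2 i)) ||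
  ((selt w.1 i < 0) && (selt w.1 (w.2 i) == selt w.1 i)).

Definition excB n (w : signed_perm n) : nat := #|[pred i | is_excB w i]|.

Definition is_derangement n (w : signed_perm n) : bool :=
  [forall i, (0 < selt w.1 i) ==> (selt w.1 (w.2 i) != selt w.1 i)].

Definition dB (R : nzRingType) (n : nat) : {poly R} :=
  \sum_(w : signed_perm n | is_derangement w) 'X^(excB w).

From HB Require Import structures.
From mathcomp Require Import all_boot all_order all_algebra all_fingroup.
From mathcomp Require Import zify ring.
Set Implicit Arguments. Unset Strict Implicit. Unset Printing Implicit Defensive.
Import Order.TTheory GRing.Theory Num.Theory.
Local Open Scope ring_scope.

(* A signed permutation of [n+1] is the insertion of a new
      letter, with a sign and an image, into a signed permutation of [n].
      Sorting by where the last letter goes gives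
        d^B_(n+2) = sum_(w derangement of [n+1], e = exc_B w)
                      (x^(e+1) + 2 (e x^e + (n+1-e) x^(e+1)))
                    + 2 (n+1) x d^B_n,
      hence the coefficient recurrence (dB_coefS)
        d_(n+2,l+1) = 2(l+1) d_(n+1,l+1) + (2n+3-2l) d_(n+1,l) + 2(n+1) d_(n,l).
   2. Palindromicity.  p(x) = x^m p(1/x) forces p_j = p_(m-j).
   3. Splitting.  Extend coefficient sequences by 0 to all integers.  The
      defect P - S+ between the coefficients of f+_n and the claimed right-hand
      side equals S- - Q (both recurrences add up to the one for d^B), so it is
      symmetric about both n/2 and (n+1)/2, hence 1-periodic, hence zero. *)


Lemma selt_lt n (s : {ffun 'I_n -> bool}) x y :
  (selt s x < selt s y) = if s x then (if s y then (y < x)%N else true)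
                          else (if s y then false else (x < y)%N).
Proof.
rewrite /selt; case: (s x); case: (s y) => /=.
- by rewrite ltrN2 ltz_nat ltnS.
- by apply: (@lt_le_trans _ _ 0); rewrite // oppr_lt0 ltz_nat.
- by apply/negbTE; rewrite -leNgt; apply: (@le_trans _ _ 0); rewrite // oppr_le0.
- by rewrite ltz_nat ltnS.
Qed.

Lemma selt_eq n (s : {ffun 'I_n -> bool}) x y : (selt s x == selt s y) = (x == y).
Proof.
have [->|nxy] := eqVneq x y; first by rewrite eqxx.
apply/negbTE; move: nxy; rewrite /selt -val_eqE /=.
by case: (s x) (s y) => [] [] /eqP nxy; apply/eqP => /eqP; lia.
Qed.

Lemma selt_neg n (s : {ffun 'I_n -> bool}) x : (selt s x < 0) = s x.
Proof. by rewrite /selt; case: (s x); rewrite ?oppr_lt0 ltz_nat. Qed.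

(* A signed permutation W of [n+1]
   corresponds to the triple (w, b, c) where b is the sign of the new letter,
   c = W i is its image, and w is W with i removed from its cycle. *)
Section Insertion.
Local Open Scope group_scope.
Variable n : nat.
Implicit Types (i : 'I_n.+1).

Definition ext_sign i (s : {ffun 'I_n -> bool}) (b : bool) : {ffun 'I_n.+1 -> bool} :=
  [ffun x => if unlift i x is Some k then s k else b].

Definition res_sign i (s : {ffun 'I_n.+1 -> bool}) : {ffun 'I_n -> bool} :=
  [ffun k => s (lift i k)].

(* q with i cut out of its cycle, so that i becomes a fixed point *)
Definition fix_at i (q : {perm 'I_n.+1}) : {perm 'I_n.+1} := q * tperm i (q i).

Lemma fix_atE i q : fix_at i q i = i.
Proof. by rewrite permM tpermR. Qed.

Definition res_fun i q (k : 'I_n) : 'I_n := odflt k (unlift i (fix_at i q (lift i k))).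

Lemma res_funE i q k : lift i (res_fun i q k) = fix_at i q (lift i k).
Proof.
rewrite /res_fun; case: unliftP => [k' -> //|h].
have := @perm_inj _ (fix_at i q) _ _ (etrans h (esym (fix_atE i q))).
by move/eqP; rewrite lift_eqF.
Qed.

Lemma res_fun_inj i q : injective (res_fun i q).
Proof.
move=> a b h; apply: (lift_inj (h:=i)); apply: (@perm_inj _ (fix_at i q)).
by rewrite -!res_funE h.
Qed.

Definition res_perm i q : {perm 'I_n} := perm (@res_fun_inj i q).

Lemma res_permE i q k : lift i (res_perm i q k) = fix_at i q (lift i k).
Proof. by rewrite permE res_funE. Qed.

Definition insert_sp i (x : signed_perm n * bool * 'I_n.+1) : signed_perm n.+1 :=
  let: (w, b, c) := x in (ext_sign i w.1 b, lift_perm i i w.2 * tperm i c).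

Definition remove_sp i (W : signed_perm n.+1) : signed_perm n * bool * 'I_n.+1 :=
  ((res_sign i W.1, res_perm i W.2), W.1 i, W.2 i).

Lemma ext_sign_lift i s b k : ext_sign i s b (lift i k) = s k.
Proof. by rewrite ffunE liftK. Qed.

Lemma ext_sign_id i s b : ext_sign i s b i = b.
Proof. by rewrite ffunE unlift_none. Qed.

Lemma remove_spK i : cancel (remove_sp i) (insert_sp i).
Proof.
case=> s p /=; congr pair.
  by apply/ffunP => x; rewrite ffunE; case: unliftP => [k ->|->]; rewrite ?ffunE.
have -> : lift_perm i i (res_perm i p) = fix_at i p.
  apply/permP => x; case: (unliftP i x) => [k ->|->].
    by rewrite lift_perm_lift res_permE.
  by rewrite lift_perm_id fix_atE.
by rewrite /fix_at -mulgA tperm2 mulg1.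
Qed.

Lemma insert_spK i : cancel (insert_sp i) (remove_sp i).
Proof.
case=> [[[s p] b] c] /=; rewrite /remove_sp /=.
have hc : (lift_perm i i p * tperm i c) i = c by rewrite permM lift_perm_id tpermL.
rewrite ext_sign_id hc; congr (_, _, _); congr pair.
  by apply/ffunP => k; rewrite ffunE ext_sign_lift.
apply/permP => k; apply: (lift_inj (h:=i)).
by rewrite res_permE /fix_at hc -mulgA tperm2 mulg1 lift_perm_lift.
Qed.

Lemma insert_sp_bij i : bijective (insert_sp i).
Proof. exact: (Bijective (insert_spK i) (remove_spK i)). Qed.

Lemma insert_sign_lift i w b c k : (insert_sp i (w, b, c)).1 (lift i k) = w.1 k.
Proof. by rewrite /= ext_sign_lift. Qed.

Lemma insert_sign_id i w b c : (insert_sp i (w, b, c)).1 i = b.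
Proof. by rewrite /= ext_sign_id. Qed.

Lemma insert_perm_id i w b c : (insert_sp i (w, b, c)).2 i = c.
Proof. by rewrite /= permM lift_perm_id tpermL. Qed.

Lemma insert_perm_lift i w b c k : (insert_sp i (w, b, c)).2 (lift i k) =
  if lift i (w.2 k) == c then i else lift i (w.2 k).
Proof.
rewrite /= permM lift_perm_lift; case: tpermP => [/eqP|->|/eqP h1 /eqP h2].
- by rewrite lift_eqF.
- by rewrite eqxx.
- by move: h2; rewrite eq_sym => /negbTE ->.
Qed.

End Insertion.

Lemma sum_insert (V : nmodType) n (i : 'I_n.+1) (F : signed_perm n.+1 -> V) :
  \sum_(W : signed_perm n.+1) F W =
  \sum_(w : signed_perm n) \sum_(b : bool) \sum_(c : 'I_n.+1) F (insert_sp i (w, b, c)).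
Proof.
rewrite (reindex (insert_sp i) (onW_bij _ (insert_sp_bij i))).
transitivity (\sum_(x : signed_perm n * bool) \sum_(c : 'I_n.+1) F (insert_sp i (x, c))).
  rewrite pair_big (eq_bigr (fun j => F (insert_sp i (j.1, j.2)))); last by move=> [].
  by apply: eq_bigl.
rewrite [RHS]pair_big (eq_bigr (fun x => \sum_(c < n.+1) F (insert_sp i ((x.1, x.2), c)))).
  by apply: eq_bigl.
by move=> [].
Qed.

Definition pos_nonfix n (w : signed_perm n) x :=
  (0 < selt w.1 x) ==> (selt w.1 (w.2 x) != selt w.1 x).

Lemma pos_nonfixE n (w : signed_perm n) x : pos_nonfix w x = w.1 x || (w.2 x != x).
Proof. by rewrite /pos_nonfix selt_eq {1}/selt; case: (w.1 x). Qed.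

Lemma is_excBE n (w : signed_perm n) x :
  is_excB w x = (selt w.1 x < selt w.1 (w.2 x)) || (w.1 x && (w.2 x == x)).
Proof. by rewrite /is_excB selt_neg selt_eq. Qed.

Lemma excB_sum n (w : signed_perm n) : excB w = (\sum_x (is_excB w x : nat))%N.
Proof.
rewrite /excB -sum1_card big_mkcond /=.
by apply: eq_bigr => x _; rewrite inE; case: is_excB.
Qed.

Lemma excB_split n (w : signed_perm n.+1) i :
  excB w = (is_excB w i + \sum_k (is_excB w (lift i k) : nat))%N.
Proof. by rewrite excB_sum (bigD1_ord i). Qed.

Lemma forall_split n (P : pred 'I_n.+1) i :
  [forall x, P x] = P i && [forall k, P (lift i k)].
Proof.
apply/forallP/andP => [h|[h1 /forallP h2] x]; first by split => //; apply/forallP.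
by case: (unliftP i x) => [k ->|->].
Qed.

Lemma derangement_split n (w : signed_perm n.+1) i :
  is_derangement w = pos_nonfix w i && [forall k, pos_nonfix w (lift i k)].
Proof. exact: forall_split. Qed.

Lemma insert_unaffected n (i : 'I_n.+1) (w : signed_perm n) b c k :
  lift i (w.2 k) != c ->
  (is_excB (insert_sp i (w, b, c)) (lift i k) = is_excB w k) /\
  (pos_nonfix (insert_sp i (w, b, c)) (lift i k) = pos_nonfix w k).
Proof.
move=> hk; have hp : (insert_sp i (w, b, c)).2 (lift i k) = lift i (w.2 k).
  by rewrite insert_perm_lift (negbTE hk).
have ltE a d : (lift i a < lift i d)%N = (a < d)%N by rewrite !ltnNge leq_bump2.
rewrite is_excBE !pos_nonfixE hp !selt_lt !insert_sign_lift !ltE (inj_eq lift_inj).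
by rewrite -selt_lt -is_excBE.
Qed.

Lemma insert_max_fix n (w : signed_perm n) b :
  excB (insert_sp ord_max (w, b, ord_max)) = (b + excB w)%N /\
  is_derangement (insert_sp ord_max (w, b, ord_max)) = b && is_derangement w.
Proof.
have hl k : lift ord_max (w.2 k) != ord_max by rewrite lift_eqF.
split.
  rewrite (excB_split _ ord_max) is_excBE insert_perm_id insert_sign_id ltxx eqxx andbT.
  rewrite excB_sum; congr addn; apply: eq_bigr => k _.
  by case: (insert_unaffected b (hl k)) => ->.
rewrite (derangement_split _ ord_max) pos_nonfixE insert_perm_id insert_sign_id eqxx orbF.
by congr andb; apply: eq_forallb => k; case: (insert_unaffected b (hl k)) => _ ->.
Qed.

(* The new letter n+1 is inserted in the cycle of w right after j: whatever
   its sign, exactly one of j and n+1 is an excedance, and j may have been a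
   positive fixed point of w. *)
Lemma insert_max_cycle n (w : signed_perm n) b j :
  excB (insert_sp ord_max (w, b, lift ord_max (w.2 j))) =
     (1 + \sum_(k | k != j) (is_excB w k : nat))%N /\
  is_derangement (insert_sp ord_max (w, b, lift ord_max (w.2 j))) =
     [forall k, (k == j) || pos_nonfix w k].
Proof.
set W := insert_sp _ _.
have hk k : k != j -> lift ord_max (w.2 k) != lift ord_max (w.2 j).
  by move=> h; rewrite (inj_eq lift_inj) (inj_eq perm_inj).
have hj : W.2 (lift ord_max j) = ord_max by rewrite insert_perm_lift eqxx.
have below (x : 'I_n) : (lift ord_max x < @ord_max n)%N by rewrite lift_max ltn_ord.
have exc_max : is_excB W ord_max = b.
  rewrite is_excBE insert_perm_id insert_sign_id lift_eqF andbF orbF selt_lt.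
  by rewrite insert_sign_id below; case: (b); case: ifP => //; rewrite ltnNge ltnW.
have exc_j : is_excB W (lift ord_max j) = ~~ b.
  rewrite is_excBE hj eq_liftF andbF orbF selt_lt insert_sign_id insert_sign_lift below.
  by case: (b); case: ifP => //; rewrite ltnNge ltnW.
split.
  rewrite (excB_split _ ord_max) exc_max (bigD1 j) //= exc_j.
  rewrite (eq_bigr (fun k => (is_excB w k : nat))); last first.
    by move=> k /hk h; case: (insert_unaffected b h) => ->.
  by rewrite addnA; case: (b).
rewrite (derangement_split _ ord_max) pos_nonfixE insert_perm_id lift_eqF orbT /=.
apply: eq_forallb => k; have [->|hkj] := eqVneq k j.
  by rewrite pos_nonfixE hj eq_liftF orbT.
by case: (insert_unaffected b (hk _ hkj)) => _ ->.
Qed.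

Lemma insert_pos_fix n (w : signed_perm n) (j : 'I_n.+1) :
  excB (insert_sp j (w, false, j)) = excB w /\
  [forall x, (x == j) || pos_nonfix (insert_sp j (w, false, j)) x] = is_derangement w.
Proof.
have hl k : lift j (w.2 k) != j by rewrite lift_eqF.
split.
  rewrite (excB_split _ j) is_excBE insert_perm_id insert_sign_id ltxx excB_sum.
  by apply: eq_bigr => k _; case: (insert_unaffected false (hl k)) => ->.
rewrite (forall_split _ j) eqxx /=; apply: eq_forallb => k.
by rewrite lift_eqF; case: (insert_unaffected false (hl k)) => _ ->.
Qed.

Section Recurrence.
Variable R : comNzRingType.

(* Generating function of the signed permutations obtained from w by inserting
   the new letter into a cycle of w, after the letter j, with a fixed sign. *)
Definition cycle_insert_gf n (w : signed_perm n) : {poly R} :=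
  \sum_(j : 'I_n) if [forall k, (k == j) || pos_nonfix w k]
                  then 'X^(1 + \sum_(k | k != j) (is_excB w k : nat))%N else 0.

(* Decomposing by the image and the sign of the last letter. *)
Lemma dB_insert_last n : dB R n.+1 =
  \sum_(w : signed_perm n)
    ((if is_derangement w then 'X^((excB w).+1) else 0) + 2%:R * cycle_insert_gf w).
Proof.
rewrite /dB big_mkcond /= (sum_insert ord_max); apply: eq_bigr => w _.
rewrite big_bool /= !(bigD1_ord ord_max) //=.
have [h1 h2] := insert_max_fix w true; have [h3 h4] := insert_max_fix w false.
rewrite h2 h4 h1 /= -addrA; congr (_ + _).
have E b : \sum_(i < n) (if is_derangement (insert_sp ord_max (w, b, lift ord_max i))
               then 'X^(excB (insert_sp ord_max (w, b, lift ord_max i))) else 0)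
           = cycle_insert_gf w.
  rewrite (reindex_inj (@perm_inj _ w.2)) /cycle_insert_gf; apply: eq_bigr => j _.
  by have [-> ->] := insert_max_cycle w b j.
by rewrite !E add0r mulr2n mulrDl mul1r.
Qed.

Lemma sum_drop_one n (e : 'I_n -> bool) :
  \sum_(j < n) 'X^(1 + \sum_(k | k != j) (e k : nat))%N =
  (\sum_k (e k : nat))%:R *: 'X^(\sum_k (e k : nat)) +
  (n%:R - (\sum_k (e k : nat))%:R) *: 'X^((\sum_k (e k : nat)).+1) :> {poly R}.
Proof.
set E := (\sum_k (e k : nat))%N.
have h j : 'X^(1 + \sum_(k | k != j) (e k : nat))%N =
   (e j : nat)%:R *: 'X^E + (1 - (e j : nat)%:R) *: 'X^(E.+1) :> {poly R}.
  have -> : E = (e j + \sum_(k | k != j) (e k : nat))%N by rewrite /E (bigD1 j).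
  case: (e j) => /=; first by rewrite scale1r subrr scale0r addr0.
  by rewrite scale0r add0r subr0 scale1r.
rewrite (eq_bigr _ (fun j _ => h j)) big_split /= -!scaler_suml natr_sum sumrB.
by rewrite sumr_const card_ord.
Qed.

Definition unique_pos_fix n (w : signed_perm n) (j : 'I_n) : bool :=
  [&& ~~ w.1 j, w.2 j == j & [forall k, (k == j) || pos_nonfix w k]].

(* Either w is a derangement, or it has a unique positive fixed point j. *)
Lemma cycle_insert_gf_split n (w : signed_perm n) : cycle_insert_gf w =
  (if is_derangement w
   then \sum_(j < n) 'X^(1 + \sum_(k | k != j) (is_excB w k : nat))%N else 0)
  + \sum_(j < n) (if unique_pos_fix w j then 'X^((excB w).+1) else 0).
Proof.
have -> : (if is_derangement w
            then \sum_(j < n) 'X^(1 + \sum_(k | k != j) (is_excB w k : nat))%N else 0)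
   = \sum_(j < n) (if is_derangement w
                  then 'X^(1 + \sum_(k | k != j) (is_excB w k : nat))%N else 0) :> {poly R}.
  by case: ifP => _ //; rewrite big1.
rewrite /cycle_insert_gf -big_split /=; apply: eq_bigr => j _; rewrite /unique_pos_fix.
case hc: (pos_nonfix w j).
  have -> : [forall k, (k == j) || pos_nonfix w k] = is_derangement w.
    by apply: eq_forallb => k; have [->|//] := eqVneq k j; rewrite hc orbT.
  move: hc; rewrite pos_nonfixE.
  by case: (w.1 j) => /= [|/negbTE ->]; rewrite ?andbF addr0.
have hd : is_derangement w = false.
  by apply/negbTE/negP => /forallP /(_ j); rewrite -/(pos_nonfix w j) hc.
rewrite hd add0r; move: hc; rewrite pos_nonfixE => /negbT.
rewrite negb_or negbK => /andP[h1 h2]; rewrite h1 h2 /=; case: ifP => // _; congr 'X^_.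
rewrite excB_sum [X in _ = X.+1](bigD1 j) //= is_excBE (eqP h2) ltxx (negbTE h1).
by rewrite add1n.
Qed.

(* Permutations of [n+1] with a unique positive fixed point j are derangements
   of [n] with j inserted as a positive fixed point. *)
Lemma sum_unique_pos_fix n :
  \sum_(w : signed_perm n.+1) \sum_(j < n.+1)
     (if unique_pos_fix w j then 'X^((excB w).+1) else 0)
  = n.+1%:R *: ('X * dB R n).
Proof.
rewrite exchange_big /= scaler_nat -[n.+1 in RHS]card_ord -sumr_const.
apply: eq_bigr => j _; rewrite (sum_insert j) /dB mulr_sumr [RHS]big_mkcond.
apply: eq_bigr => w _; rewrite big_bool /= big1; last first.
  by move=> c _; rewrite /unique_pos_fix insert_sign_id.
rewrite add0r (bigD1 j) //= big1; last first.
  by move=> c hc; rewrite /unique_pos_fix insert_perm_id (negbTE hc) andbF.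
have [h1 h2] := insert_pos_fix w j.
rewrite addr0 /unique_pos_fix insert_sign_id insert_perm_id eqxx h2 h1 /=.
by case: ifP; rewrite ?mulr0 // exprS.
Qed.

Lemma dB_rec n : dB R n.+2 =
  \sum_(w : signed_perm n.+1 | is_derangement w)
     ('X^((excB w).+1) + 2%:R * ((excB w)%:R *: 'X^(excB w)
         + (n.+1%:R - (excB w)%:R) *: 'X^((excB w).+1)))
  + 2%:R * (n.+1%:R *: ('X * dB R n)).
Proof.
rewrite dB_insert_last -sum_unique_pos_fix mulr_sumr [in RHS]big_mkcond -big_split /=.
apply: eq_bigr => w _; rewrite cycle_insert_gf_split mulrDr addrA sum_drop_one -excB_sum.
by case: ifP; rewrite ?mulr0 ?addr0.
Qed.

Lemma coef_dB n k :
  (dB R n)`_k = \sum_(w : signed_perm n | is_derangement w) (excB w == k)%:R.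
Proof. by rewrite /dB coef_sum; apply: eq_bigr => w _; rewrite coefXn eq_sym. Qed.

Lemma dB_coef0 n : (dB R n.+2)`_0 = 0.
Proof.
rewrite dB_rec coefD coef_sum big1 ?add0r; last first.
  move=> w _; rewrite mulr_natl coefD coefMn !coefD !coefZ !coefXn /=.
  by case: (excB w) => [|e]; rewrite ?mulr0 ?mul0r ?addr0 ?mul0rn //= ?mulr0 ?addr0 ?mul0rn.
by rewrite mulr_natl coefMn coefZ coefXM /= mulr0 mul0rn.
Qed.

Lemma dB_coefS n l : (dB R n.+2)`_l.+1 =
  (2 * l.+1)%:R * (dB R n.+1)`_l.+1
  + ((2 * n.+1 + 3)%:R - (2 * l.+1)%:R) * (dB R n.+1)`_l
  + (2 * n.+1)%:R * (dB R n)`_l.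
Proof.
rewrite dB_rec coefD coef_sum mulr_natl coefMn coefZ coefXM /=.
rewrite !coef_dB !mulr_sumr -big_split /=; congr (_ + _); last first.
  by rewrite -sumrMnl; apply: eq_bigr => w _; rewrite natrM; ring.
apply: eq_bigr => w _; rewrite mulr_natl coefD coefMn !coefD !coefZ !coefXn.
have [->|h1] := eqVneq (excB w) l.+1.
  by rewrite ?eqSS ?eqxx ?(ltn_eqF (ltnSn l)) ?(gtn_eqF (ltnSn l)) /= !natrM !natrD; ring.
have [->|h2] := eqVneq (excB w) l.
  by rewrite ?eqSS ?eqxx ?(ltn_eqF (ltnSn l)) ?(gtn_eqF (ltnSn l)) /= !natrM !natrD; ring.
by rewrite eqSS (eq_sym l) (negbTE h2) /= !natrM !natrD; ring.
Qed.

End Recurrence.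

Section Palindromic.
Variable R : numFieldType.

Lemma poly_eq0_off0 (r : {poly R}) : (forall x, x != 0 -> r.[x] = 0) -> r = 0.
Proof.
move=> h; apply/eqP/negPn/negP => rnz.
suff : (size [seq (i.+1)%:R : R | i <- iota 0 (size r)] < size r)%N.
  by rewrite size_map size_iota ltnn.
apply: max_poly_roots rnz _ _.
  by apply/allP => x /mapP[i _ ->]; apply/eqP/h; rewrite pnatr_eq0.
by rewrite map_inj_uniq ?iota_uniq // => a b /eqP; rewrite eqr_nat eqSS => /eqP.
Qed.

Lemma palindromic_coef (p : {poly R}) m :
  (forall x, x != 0 -> p.[x] = x ^+ m * p.[x^-1]) ->
  forall j, p`_j = if (j <= m)%N then p`_(m - j) else 0.
Proof.
move=> h j; pose N := (size p + m)%N.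
pose q := \poly_(i < N.+1) p`_(N - i).
have hq x : x != 0 -> x ^+ N * p.[x^-1] = q.[x].
  move=> xnz; rewrite (horner_coef_wide _ (n:=N.+1)); last by rewrite /N; lia.
  rewrite (horner_coef_wide _ (n:=N.+1) (p:=q)); last by rewrite size_poly.
  rewrite mulr_sumr (reindex_inj rev_ord_inj) /=; apply: eq_bigr => i _.
  rewrite subSS coef_poly ltn_ord mulrCA exprVn; congr (_ * _).
  have -> : x ^+ N = x ^+ (N - i) * x ^+ i by rewrite -exprD subnK // -ltnS.
  by rewrite mulrAC mulrV ?mul1r // unitfE expf_neq0.
have e : 'X^(N - m) * p = q.
  apply/eqP; rewrite -subr_eq0; apply/eqP/poly_eq0_off0 => x xnz.
  by rewrite !hornerE -hq // (h x xnz) mulrA -exprD subnK ?subrr // /N; lia.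
have hs i : (size p <= i)%N -> p`_i = 0 by apply: nth_default.
case: (leqP j N) => hjN; last first.
  rewrite /N in hjN; rewrite hs; last by lia.
  by case: ifP => // hjm; rewrite hs //; lia.
have := congr1 (fun r : {poly R} => r`_(N - j)) e; rewrite /= coefXnM coef_poly.
have -> : (N - j < N.+1)%N by lia.
rewrite (subKn hjN); case: (leqP j m) => hjm.
  by rewrite ifF; [move=> <-; congr nth; lia | lia].
by rewrite ifT; [move=> <- | lia].
Qed.

End Palindromic.

Definition zsym (T : Type) (a : int -> T) (d : nat) : Prop := forall t, a t = a (d%:Z - t).

Lemma zsymB (V : zmodType) (a b : int -> V) d :
  zsym a d -> zsym b d -> zsym (fun t => a t - b t) d.
Proof. by move=> ha hb t; rewrite ha hb. Qed.

(* Symmetry about both d/2 and (d+1)/2 makes a sequence 1-periodic, so a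
   sequence vanishing at negative indices must vanish identically. *)
Lemma zsym_succ_eq0 (V : zmodType) (a : int -> V) d :
  zsym a d -> zsym a d.+1 -> (forall t, t < 0 -> a t = 0) -> forall t, a t = 0.
Proof.
move=> ha ha1 hneg t.
have step s : a s = a (s - 1) by rewrite {1}ha1 ha; congr a; lia.
have down k : a t = a (t - k%:Z).
  by elim: k => [|k IH]; rewrite ?subr0 // IH step; congr a; lia.
rewrite (down `|t|.+1) hneg //; clear down; case: t => k; rewrite ?NegzE /=; lia.
Qed.

Definition dB_step (R : comNzRingType) (m : nat) (d1 d0 : int -> R) (t : int) : R :=
  2 * t%:~R * d1 t + (2 * m.+2%:R + 1 - 2 * t%:~R) * d1 (t - 1)
  + 2 * m.+1%:R * d0 (t - 1).

(* P, A, B (resp. Q, C, Bm) stand for the coefficients of f+_(m+2), f+_(m+1),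
   f+_m (resp. f-_(m+2), f-_(m+1), f-_m), and D1, D0 for those of d^B_(m+1),
   d^B_m. *)
Section Splitting.
Variable R : comNzRingType.
Variable m : nat.
Variables A B C Bm P Q D0 D1 : int -> R.
Hypotheses (hA : zsym A m.+1) (hB : zsym B m) (hC : zsym C m.+2) (hBm : zsym Bm m.+1).
Hypotheses (hP : zsym P m.+2) (hQ : zsym Q m.+3).
Hypotheses (hD1 : forall t, A t + C t = D1 t) (hD0 : forall t, B t + Bm t = D0 t).
Hypothesis hPQ : forall t, P t + Q t = dB_step m D1 D0 t.
Hypotheses (hPneg : forall t, t < 0 -> P t = 0) (hAneg : forall t, t < 0 -> A t = 0).
Hypotheses (hBneg : forall t, t < 0 -> B t = 0) (hCneg : forall t, t < 0 -> C t = 0).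

Definition split_plus (t : int) : R :=
  (2 * t%:~R - 1) * A t + 2 * (m.+2%:R - t%:~R) * A (t - 1)
  + 2 * m.+1%:R * B (t - 1) + D1 t.

Definition split_minus (t : int) : R :=
  (2 * t%:~R - 1) * C t + 2 * (m.+2%:R - t%:~R) * C (t - 1)
  + 2 * m.+1%:R * Bm (t - 1) + D1 (t - 1).

Lemma split_plus_sym : zsym split_plus m.+2.
Proof.
move=> t; rewrite /split_plus -!hD1.
have eA1 : A (m.+2%:Z - t) = A (t - 1) by rewrite hA; congr A; lia.
have eA2 : A (m.+2%:Z - t - 1) = A t by rewrite hA; congr A; lia.
have eB : B (m.+2%:Z - t - 1) = B (t - 1) by rewrite hB; congr B; lia.
have eC : C (m.+2%:Z - t) = C t by rewrite hC; congr C; lia.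
by rewrite eA1 eA2 eB eC !intrB; ring.
Qed.

Lemma split_minus_sym : zsym split_minus m.+3.
Proof.
move=> t; rewrite /split_minus -!hD1.
have eA : A (m.+3%:Z - t - 1) = A (t - 1) by rewrite hA; congr A; lia.
have eC1 : C (m.+3%:Z - t) = C (t - 1) by rewrite hC; congr C; lia.
have eC2 : C (m.+3%:Z - t - 1) = C t by rewrite hC; congr C; lia.
have eBm : Bm (m.+3%:Z - t - 1) = Bm (t - 1) by rewrite hBm; congr Bm; lia.
by rewrite eA eC1 eC2 eBm !intrB; ring.
Qed.

Lemma split_sum t : split_plus t + split_minus t = dB_step m D1 D0 t.
Proof. by rewrite /split_plus /split_minus /dB_step -!hD1 -hD0; ring. Qed.

(* P - split_plus = split_minus - Q is symmetric about both (m+2)/2 and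
   (m+3)/2, and vanishes at negative indices. *)
Lemma split_recurrence t : P t = split_plus t /\ Q t = split_minus t.
Proof.
pose U s := P s - split_plus s.
have U_eq s : U s = split_minus s - Q s.
  by rewrite /U -[P s](addrK (Q s)) hPQ -split_sum; ring.
have U0 : forall s, U s = 0.
  apply: (@zsym_succ_eq0 _ _ m.+2); first exact: zsymB hP split_plus_sym.
    by move=> s; rewrite !U_eq; apply: zsymB split_minus_sym hQ s.
  move=> s hs; have hs1 : s - 1 < 0 by lia.
  rewrite /U /split_plus -hD1 (hPneg hs) (hAneg hs) (hCneg hs) (hAneg hs1) (hBneg hs1).
  by ring.
split; first by apply/eqP; rewrite -subr_eq0 -/(U t) U0.
by apply/eqP; rewrite eq_sym -subr_eq0 -U_eq U0.
Qed.

End Splitting.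

Definition zcoef (R : nzRingType) (p : {poly R}) (t : int) : R :=
  if 0 <= t then p`_`|t| else 0.

Lemma zcoef_nat (R : nzRingType) (p : {poly R}) (k : nat) : zcoef p k = p`_k.
Proof. by []. Qed.

Lemma zcoef_pred (R : nzRingType) (p : {poly R}) (l : nat) : zcoef p (l.+1%:Z - 1) = p`_l.
Proof. by rewrite (_ : l.+1%:Z - 1 = l) //; lia. Qed.

Lemma zcoef_neg (R : nzRingType) (p : {poly R}) t : t < 0 -> zcoef p t = 0.
Proof. by rewrite /zcoef ltNge => /negbTE ->. Qed.

Lemma zcoefD (R : nzRingType) (p q : {poly R}) t : zcoef (p + q) t = zcoef p t + zcoef q t.
Proof. by rewrite /zcoef coefD; case: ifP; rewrite ?addr0. Qed.

Lemma zcoef_sym (R : numFieldType) (p : {poly R}) m :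
  (forall x, x != 0 -> p.[x] = x ^+ m * p.[x^-1]) -> zsym (zcoef p) m.
Proof.
move=> /palindromic_coef hp t.
case: (ltP t 0) => ht.
  rewrite zcoef_neg // /zcoef ifT; last by lia.
  rewrite hp ifF //; apply/negbTE; rewrite -ltnNge.
  by move: ht; case: t => // k _; rewrite NegzE opprK -PoszD absz_nat; lia.
case: (ltP (m%:Z) t) => hm.
  rewrite [RHS]zcoef_neg; last by lia.
  by case: t ht hm => // j _ hm; rewrite zcoef_nat hp ifF //; apply/negbTE; lia.
case: t ht hm => // j _ hm; rewrite zcoef_nat hp ifT; last by lia.
by rewrite /zcoef ifT ?subzn ?absz_nat //; lia.
Qed.

Lemma zcoef_dB_rec (R : comNzRingType) m t :
  zcoef (dB R m.+2) t = dB_step m (zcoef (dB R m.+1)) (zcoef (dB R m)) t.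
Proof.
rewrite /dB_step; case: t => [[|l]|k].
- by rewrite zcoef_nat dB_coef0 !(zcoef_neg _ (_ : 0 - 1 < 0)) //; ring.
- by rewrite !zcoef_pred !zcoef_nat dB_coefS; ring.
- by rewrite !zcoef_neg //; [ring | lia..].
Qed.

Theorem corollary7p9 (R : realFieldType) (fp fm : nat -> {poly R})
  (hdec : forall n, dB R n = fp n + fm n)
  (hfp : forall n (x : R), x != 0 -> (fp n).[x] = x ^+ n * (fp n).[x^-1])
  (hfm : forall n (x : R), x != 0 -> (fm n).[x] = x ^+ n.+1 * (fm n).[x^-1])
  (n k : nat) (hn : (2 <= n)%N) (hk : (1 <= k)%N) :
  (fp n)`_k = ((2 * k)%:R - 1) * (fp n.-1)`_k
              + 2%:R * (n%:R - k%:R) * (fp n.-1)`_k.-1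
              + 2%:R * (n.-1)%:R * (fp n.-2)`_k.-1
              + (dB R n.-1)`_k
  /\
  (fm n)`_k = ((2 * k)%:R - 1) * (fm n.-1)`_k
              + 2%:R * (n%:R - k%:R) * (fm n.-1)`_k.-1
              + 2%:R * (n.-1)%:R * (fm n.-2)`_k.-1
              + (dB R n.-1)`_k.-1.
Proof.
case: n hn => [|[|m]] // _; case: k hk => [|l] // _ /=.
have hD j t : zcoef (fp j) t + zcoef (fm j) t = zcoef (dB R j) t by rewrite -zcoefD hdec.
have hPQ t : zcoef (fp m.+2) t + zcoef (fm m.+2) t
             = dB_step m (zcoef (dB R m.+1)) (zcoef (dB R m)) t.
  by rewrite hD zcoef_dB_rec.
have [] := split_recurrence
  (zcoef_sym (hfp m.+1)) (zcoef_sym (hfp m)) (zcoef_sym (hfm m.+1)) (zcoef_sym (hfm m))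
  (zcoef_sym (hfp m.+2)) (zcoef_sym (hfm m.+2)) (hD m.+1) (hD m) hPQ
  (@zcoef_neg _ _) (@zcoef_neg _ _) (@zcoef_neg _ _) (@zcoef_neg _ _) l.+1.
rewrite /split_plus /split_minus !zcoef_pred !zcoef_nat => -> ->.
by rewrite !natrM; split; ring.
Qed.
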